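(* Let $\Delta$ be a local derivation of $\mathcal{S}$ with $\Delta(L_0)=\Delta(L_1)=0$. Then $\Delta(L_m)=0$ for all $m\in\mathbb{Z}$.
   Context: $\mathcal{S}$ is the centerless super Virasoro algebra: the Lie superalgebra over $\mathbb{C}$ with basis $\{L_m,G_n: m,n\in\mathbb{Z}\}$, $L_m$ even, $G_n$ odd, and brackets $[L_m,L_n]=(m-n)L_{m+n}$, $[L_m,G_r]=(\frac m2-r)G_{m+r}$, $[G_r,G_s]=2L_{r+s}$. A homogeneous linear map $D$ of parity $|D|$ is a derivation if $D([x,y])=[D(x),y]+(-1)^{|D||x|}[x,D(y)]$ for homogeneous $x,y$; derivations are sums of even and odd ones. A linear map $\Delta:\mathcal{S}\to\mathcal{S}$ is a local derivation if for every $x$ there is a derivation $D_x$ with $\Delta(x)=D_x(x)$. *)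

From HB Require Import structures.
From mathcomp Require Import all_boot all_order all_algebra.
From mathcomp Require Import boolp classical_sets functions cardinality fsbigop.
From mathcomp Require Import complex Rstruct.
Set Implicit Arguments. Unset Strict Implicit. Unset Printing Implicit Defensive.
Import Order.TTheory GRing.Theory Num.Theory.
Local Open Scope ring_scope.
Local Open Scope classical_set_scope.

Definition C : Type := (Rdefinitions.R)[i].

(* Ambient space: pairs (a, b) of coefficient families; a m is the coefficient
   of L_m (even part), b r the coefficient of G_r (odd part).  The centerless
   super Virasoro algebra S is the subspace of finitely supported pairs. *)
Definition V : Type := ((int -> C) * (int -> C))%type.

Definition vadd (x y : V) : V := (fun k => x.1 k + y.1 k, fun k => x.2 k + y.2 k).
Definition vscale (c : C) (x : V) : V := (fun k => c * x.1 k, fun k => c * x.2 k).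
Definition vzero : V := (fun _ => 0, fun _ => 0).

Definition inS (x : V) : Prop := finite_set [set k | x.1 k != 0 \/ x.2 k != 0].

Definition Lb (m : int) : V := (fun k => if k == m then 1 else 0, fun _ => 0).
Definition Gb (r : int) : V := (fun _ => 0, fun k => if k == r then 1 else 0).

(* homogeneity: parity false = even, true = odd *)
Definition homog (p : bool) (x : V) : Prop :=
  if p then forall k, x.1 k = 0 else forall k, x.2 k = 0.

(* The super bracket, extended bilinearly from
   [L_m,L_n]=(m-n)L_{m+n}, [L_m,G_r]=(m/2-r)G_{m+r}, [G_r,L_m]=-(m/2-r)G_{m+r},
   [G_r,G_s]=2L_{r+s}. Sums are finitely supported on elements of S. *)
Definition bracket (x y : V) : V :=
  (fun k => \sum_(m \in [set: int]) ((m - (k - m))%:~R * x.1 m * y.1 (k - m))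
            + \sum_(r \in [set: int]) (2 * x.2 r * y.2 (k - r)),
   fun k => \sum_(m \in [set: int]) ((m%:~R / 2 - (k - m)%:~R) * x.1 m * y.2 (k - m))
            - \sum_(r \in [set: int]) ((((k - r)%:~R / 2) - r%:~R) * x.2 r * y.1 (k - r))).

(* linear maps S -> S (given as maps on V, only their behaviour on S matters) *)
Definition linear_on_S (D : V -> V) : Prop :=
  [/\ forall x, inS x -> inS (D x),
      forall x y, inS x -> inS y -> D (vadd x y) = vadd (D x) (D y)
    & forall c x, inS x -> D (vscale c x) = vscale c (D x)].

Definition sgn (p q : bool) : C := if p && q then -1 else 1.

Definition homog_derivation (p : bool) (D : V -> V) : Prop :=
  [/\ linear_on_S D,
      forall q x, inS x -> homog q x -> homog (p (+) q) (D x)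
    & forall q q' x y, inS x -> inS y -> homog q x -> homog q' y ->
        D (bracket x y) = vadd (bracket (D x) y) (vscale (sgn p q) (bracket x (D y)))].

Definition derivation (D : V -> V) : Prop :=
  exists D0 D1, [/\ homog_derivation false D0, homog_derivation true D1
    & forall x, inS x -> D x = vadd (D0 x) (D1 x)].

Definition local_derivation (Delta : V -> V) : Prop :=
  linear_on_S Delta /\
  forall x, inS x -> exists D, derivation D /\ Delta x = D x.

(* A derivation of S restricted to the L_n is a 1-cocycle of the Witt algebra
   with values in the density modules of weights 1 (even part) and 1/2 (odd
   part); these have trivial first cohomology, so every derivation agrees on
   the L_n with ad b for some b in S.  Fix r <> 0 and apply the local property
   at x = (m - 1) r^m L_0 - m r^(m-1) L_1 + L_m: as Delta kills L_0 and L_1,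
   Delta(L_m) = Delta(x) = [b, x] for some b.  Reading the coefficients of an
   element as a Laurent polynomial, [b, L_n] becomes r^n (r B'(r) - t n B(r)),
   and the coefficients of x make the transform of [b, x] vanish at r.  So the
   Laurent polynomial of Delta(L_m) vanishes at every r <> 0, hence is zero. *)

From HB Require Import structures.
From mathcomp Require Import all_boot all_order all_algebra.
From mathcomp Require Import finmap boolp classical_sets functions cardinality fsbigop.
From mathcomp Require Import complex Rstruct zify ring.
Set Implicit Arguments. Unset Strict Implicit. Unset Printing Implicit Defensive.
Import Order.TTheory GRing.Theory Num.Theory.
Local Open Scope ring_scope.
Local Open Scope classical_set_scope.

Definition fsupp (I : choiceType) (R : zmodType) (f : I -> R) : Prop :=
  finite_set (f @^-1` [set~ 0]).

Section FiniteSupport.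
Variables (I : choiceType) (R : zmodType).
Implicit Types f g : I -> R.

Lemma fsuppD f g : fsupp f -> fsupp g -> fsupp (fun i => f i + g i).
Proof.
move=> ff fg; apply: (@sub_finite_set _ _ (f @^-1` [set~ 0] `|` g @^-1` [set~ 0])).
  move=> i /= fgi; have [fi|/eqP] := eqVneq (f i) 0; last by left.
  by right => gi; apply: fgi; rewrite fi gi addr0.
by rewrite finite_setU.
Qed.

Lemma fsum_delta (F : I -> R) (a : I) :
  (forall i, i != a -> F i = 0) -> \sum_(i \in [set: I]) F i = F a.
Proof.
move=> Fa; rewrite -(fsbig_widen [set a] [set: I]) ?fsbig_set1 //.
by move=> i [_ /= /eqP ia]; exact: Fa.
Qed.

Lemma fsumD f g : fsupp f -> fsupp g ->
  \sum_(i \in [set: I]) (f i + g i) = \sum_(i \in [set: I]) f i + \sum_(i \in [set: I]) g i.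
Proof.
move=> ff fg; set A := f @^-1` [set~ 0] `|` g @^-1` [set~ 0].
have Afin : finite_set A by rewrite finite_setU.
have widen (h : I -> R) :
    (forall i, ~ A i -> h i = 0) -> \sum_(i \in A) h i = \sum_(i \in [set: I]) h i.
  by move=> hA; apply: fsbig_widen => // i [_ /hA].
have outA i : ~ A i -> f i = 0 /\ g i = 0.
  by move=> /not_orP[/contrapT fi /contrapT gi].
by rewrite -!widen ?fsbig_split // => i /outA [fi gi]; rewrite ?fi ?gi ?addr0.
Qed.

End FiniteSupport.

Lemma fsuppMl (I : choiceType) (R : pzRingType) (c f : I -> R) :
  fsupp f -> fsupp (fun i => c i * f i).
Proof. by apply: sub_finite_set => i /= cfi fi; apply: cfi; rewrite fi mulr0. Qed.

Lemma fsupp_shift (R : zmodType) (f : int -> R) (n : int) :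
  fsupp f -> fsupp (fun j => f (j - n)).
Proof.
move=> ff; rewrite /fsupp (_ : _ @^-1` _ = (+%R n) @` (f @^-1` [set~ 0])).
  exact: finite_image.
apply/seteqP; split => [j /= fj | _ [i /= fi <-]] /=; last by rewrite [n + i]addrC addrK.
by exists (j - n); rewrite // addrC subrK.
Qed.

Lemma poly_eq0_nonzero_roots (R : numDomainType) (P : {poly R}) :
  (forall r, r != 0 -> root P r) -> P = 0.
Proof.
move=> Proot; apply: (@roots_geq_poly_eq0 _ _ [seq i.+1%:R | i <- iota 0 (size P)]).
- by apply/allP => _ /mapP[i _ ->]; apply: Proot; rewrite pnatr_eq0.
- by rewrite map_inj_uniq ?iota_uniq // => a b /eqP; rewrite eqr_nat => /eqP[].
- by rewrite size_map size_iota.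
Qed.

Section Laurent.
Variable R : numFieldType.
Implicit Types (f g : int -> R) (r : R).

Definition laurent f r : R := \sum_(j \in [set: int]) r ^ j * f j.

Lemma laurentD f g r : fsupp f -> fsupp g ->
  laurent (fun j => f j + g j) r = laurent f r + laurent g r.
Proof.
move=> ff fg; rewrite /laurent -fsumD; try exact: fsuppMl.
by apply: eq_fsbigr => j _; rewrite mulrDr.
Qed.

Lemma laurentZ (c : R) f r : laurent (fun j => c * f j) r = c * laurent f r.
Proof. by rewrite /laurent mulr_fsumr; apply: eq_fsbigr => j _; rewrite mulrCA. Qed.

Lemma laurent_fset f r : fsupp f ->
  laurent f r = \sum_(j <- fset_set (f @^-1` [set~ 0])) r ^ j * f j.
Proof.
move=> ff; rewrite /laurent -fsbig_finite //.
rewrite -(fsbig_widen (f @^-1` [set~ 0]) [set: int]) //.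
by move=> j [_ /contrapT /= ->]; rewrite mulr0.
Qed.

Lemma laurent_eq0 f : fsupp f -> (forall r, r != 0 -> laurent f r = 0) ->
  forall j, f j = 0.
Proof.
move=> ff lf0 j; set s : seq int := fset_set (f @^-1` [set~ 0]).
have [js|] := boolP (j \in s); last by rewrite in_fset_set // notin_setE /= => /contrapT.
pose N := \max_(i <- s) `|i|%N.
have Ns i : i \in s -> 0 <= i + N%:Z.
  move=> si; suff : (`|i| <= N)%N by lia.
  exact: leq_bigmax_seq.
pose P := \sum_(i <- s) f i *: 'X^`|i + N|.
have P0 : P = 0.
  apply: poly_eq0_nonzero_roots => r r0; apply/eqP.
  rewrite horner_sum (eq_big_seq (fun i => r ^ i * f i * r ^+ N)).
    by rewrite -mulr_suml -laurent_fset // lf0 // mul0r.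
  move=> i si; rewrite hornerZ hornerXn exprnP (gez0_abs (Ns i si)) expfzDr //.
  by rewrite -exprnP mulrCA mulrA.
have := congr1 (fun p : {poly R} => p`_`|j + N|) P0.
rewrite coef0 coef_sum (bigD1_seq j) ?fset_uniq //= coefZ coefXn eqxx mulr1.
rewrite big1_seq ?addr0 // => i /andP[ij si].
rewrite coefZ coefXn; case: eqP => [/eqP|]; last by rewrite mulr0.
by have := Ns i si; have := Ns j js; move: ij => /eqP; lia.
Qed.

(* The coefficients of [b, L_n] for b in the density module of weight t. *)
Definition Lact t b (n : int) : int -> R :=
  fun j => ((j - n)%:~R - t * n%:~R) * b (j - n).

Lemma fsupp_Lact t b n : fsupp b -> fsupp (Lact t b n).
Proof. by move=> fb; apply: fsuppMl; exact: fsupp_shift. Qed.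

Lemma laurent_Lact t b n r : fsupp b -> r != 0 ->
  laurent (Lact t b n) r =
  r ^ n * (laurent (fun k => k%:~R * b k) r - t * n%:~R * laurent b r).
Proof.
move=> fb r0.
have -> : laurent (Lact t b n) r =
    laurent (fun k => r ^ n * (k%:~R * b k) + - (r ^ n * t * n%:~R) * b k) r.
  rewrite /laurent (reindex_fsbigT (fun k => k + n)); last first.
    by exists (fun k => k - n) => k; [rewrite addrK | rewrite subrK].
  by apply: eq_fsbigr => k _; rewrite /Lact addrK expfzDr //; ring.
rewrite laurentD ?laurentZ; first ring.
- by apply: fsuppMl; apply: fsuppMl.
- exact: fsuppMl.
Qed.

(* The coefficients of L_0 and L_1 cancel both the B' and the B term of L_m. *)
Lemma laurent_Lact_cancel t b m r : fsupp b -> r != 0 ->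
  laurent (fun j => (m - 1)%:~R * r ^ m * Lact t b 0 j
                    + (- (m%:~R * r ^ (m - 1)) * Lact t b 1 j + Lact t b m j)) r = 0.
Proof.
move=> fb r0.
have rm : r ^ m = r ^ (m - 1) * r by rewrite -[X in _ * X]expr1z -expfzDr // subrK.
have fL n : fsupp (Lact t b n) by exact: fsupp_Lact.
have fcL c n : fsupp (fun j => c * Lact t b n j) by exact: (fsuppMl (fun=> c) (fL n)).
rewrite !laurentD ?laurentZ ?laurent_Lact ?expr0z ?expr1z ?rm //; first ring.
exact: fsuppD.
Qed.

End Laurent.

Lemma eq_of_diff_mul (R : comNzRingType) (k a b c d : R) :
  c = d -> a - b = k * (c - d) -> a = b.
Proof. by move=> -> /eqP; rewrite subrr mulr0 subr_eq0 => /eqP. Qed.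

Section WittCocycle.
Variables (R : numFieldType) (t : R) (Y : int -> int -> R).
Hypotheses (t_neq0 : t != 0) (t1_neq0 : t + 1 != 0) (t2_neq0 : t + 2 != 0).
Hypothesis Y_cocycle : forall k l j,
  (k - l)%:~R * Y (k + l) j = Lact t (Y k) l j - Lact t (Y l) k j.

Lemma Y_cocycle0 n j :
  (j - n)%:~R * Y n j = ((j - n)%:~R - t * n%:~R) * Y 0 (j - n).
Proof.
have := Y_cocycle 0 n j; rewrite /Lact !add0r !subr0 mulr0 subr0 => h.
by apply: (eq_of_diff_mul (k := 1) h); ring.
Qed.

Lemma Y00 : Y 0 0 = 0.
Proof.
have := Y_cocycle0 1 1; rewrite subrr mul0r sub0r mulr1 => /esym/eqP.
by rewrite mulf_eq0 oppr_eq0 (negbTE t_neq0) => /eqP.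
Qed.

Lemma Y_diag_add k l : (k - l)%:~R * Y (k + l) (k + l) =
  (k%:~R - t * l%:~R) * Y k k - (l%:~R - t * k%:~R) * Y l l.
Proof. by rewrite Y_cocycle /Lact addrK [k + l]addrC addrK. Qed.

Lemma Y_diagN k : Y (- k) (- k) = - Y k k.
Proof.
have [->|k0] := eqVneq k 0; first by rewrite oppr0 Y00 oppr0.
have tk0 : (t + 1) * k%:~R != 0 by rewrite mulf_neq0 ?intr_eq0.
have := Y_diag_add k (- k); rewrite addrN Y00 mulr0 => h.
by apply: (mulfI tk0); apply: (eq_of_diff_mul (k := -1) h); ring.
Qed.

Lemma Y_diag_nat (n : nat) : Y n n = n%:R * Y 1 1.
Proof.
case: n => [|[|n]]; rewrite ?mul0r ?mul1r ?Y00 //.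
elim: n => [|n IH].
  have := Y_diag_add 2 (-1); rewrite Y_diagN => h.
  by apply: (mulfI t2_neq0); apply: (eq_of_diff_mul (k := -1) h); ring.
have := Y_diag_add n.+2 1; rewrite -PoszD addn1 IH => h.
have n1 : n.+1%:R != 0 :> R by rewrite pnatr_eq0.
by apply: (mulfI n1); apply: (eq_of_diff_mul (k := 1) h); ring.
Qed.

Lemma Y_diag k : Y k k = k%:~R * Y 1 1.
Proof. by case: k => n; rewrite ?NegzE ?Y_diagN Y_diag_nat // mulNr. Qed.

(* Off the diagonal b is read off Y 0; the diagonal Y k k = k Y 1 1 fixes b 0. *)
Definition coboundary_coef (i : int) : R :=
  if i == 0 then - Y 1 1 / t else Y 0 i / i%:~R.

Lemma cocycle_coboundary n j : Y n j = Lact t coboundary_coef n j.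
Proof.
rewrite /Lact /coboundary_coef; have [->|jn] := eqVneq j n.
  by rewrite subrr eqxx Y_diag; field.
have jn0 : j - n != 0 by rewrite subr_eq0.
have jnR : (j - n)%:~R != 0 :> R by rewrite intr_eq0.
rewrite (negbTE jn0); apply: (mulfI jnR).
by rewrite Y_cocycle0 mulrCA [_ * (_ / _)]mulrC divfK.
Qed.

Lemma fsupp_coboundary_coef : fsupp (Y 0) -> fsupp coboundary_coef.
Proof.
move=> fY; apply: (@sub_finite_set _ _ (Y 0 @^-1` [set~ 0] `|` [set 0])).
  move=> i /=; rewrite /coboundary_coef; case: eqP => [-> _|_ Yi]; first by right.
  by left => Y0i; apply: Yi; rewrite Y0i mul0r.
by rewrite finite_setU; split => //; exact: finite_set1.
Qed.

End WittCocycle.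

Lemma nonexceptional_weight_gt0 (R : numFieldType) (t : R) :
  0 < t -> [/\ t != 0, t + 1 != 0 & t + 2 != 0].
Proof. by move=> t0; rewrite !gt_eqF ?addr_gt0. Qed.

Lemma V_ext (x y : V) :
  (forall j, x.1 j = y.1 j) -> (forall j, x.2 j = y.2 j) -> x = y.
Proof.
by case: x => x1 x2; case: y => y1 y2 /= h1 h2; rewrite (funext h1) (funext h2).
Qed.

Lemma inS_fsupp x : inS x <-> fsupp x.1 /\ fsupp x.2.
Proof.
rewrite /inS (_ : [set k | _] = x.1 @^-1` [set~ 0] `|` x.2 @^-1` [set~ 0]).
  by rewrite finite_setU.
by apply/seteqP; split => k [/eqP|/eqP]; by [left | right].
Qed.

Lemma inS_Lb n : inS (Lb n).
Proof.
apply/inS_fsupp; rewrite /fsupp; split.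
  by apply: (sub_finite_set _ (finite_set1 n)) => k /=; case: eqP.
by apply: (sub_finite_set _ (finite_set0 _)) => k /=; apply.
Qed.

Lemma inS_vadd x y : inS x -> inS y -> inS (vadd x y).
Proof.
by move=> /inS_fsupp[x1 x2] /inS_fsupp[y1 y2]; apply/inS_fsupp; split; apply: fsuppD.
Qed.

Lemma inS_vscale c x : inS x -> inS (vscale c x).
Proof. by move=> /inS_fsupp[x1 x2]; apply/inS_fsupp; split; apply: (fsuppMl (fun=> c)). Qed.

Lemma bracket_Lb_r y n : bracket y (Lb n) = (Lact 1 y.1 n, Lact 2^-1 y.2 n).
Proof.
have at_n j i : (j - i == n) = (i == j - n) by apply/eqP/eqP; lia.
have zero (F : int -> C) : \sum_(i \in [set: int]) F i * 0 = 0.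
  by rewrite fsbig1 // => i _; rewrite mulr0.
apply: V_ext => j /=; rewrite zero ?addr0 ?sub0r (fsum_delta (a := j - n)).
- by rewrite at_n eqxx /Lact; ring.
- by move=> i /negbTE ijn; rewrite at_n ijn mulr0.
- by rewrite at_n eqxx /Lact; ring.
- by move=> i /negbTE ijn; rewrite at_n ijn mulr0.
Qed.

Lemma bracket_Lb_l y n :
  bracket (Lb n) y = (fun j => - Lact 1 y.1 n j, fun j => - Lact 2^-1 y.2 n j).
Proof.
have zero (F G : int -> C) : \sum_(i \in [set: int]) F i * 0 * G i = 0.
  by rewrite fsbig1 // => i _; rewrite mulr0 mul0r.
apply: V_ext => j /=; rewrite zero ?addr0 ?subr0 (fsum_delta (a := n)).
- by rewrite eqxx /Lact; ring.
- by move=> i /negbTE ->; rewrite mulr0 mul0r.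
- by rewrite eqxx /Lact; ring.
- by move=> i /negbTE ->; rewrite mulr0 mul0r.
Qed.

Lemma bracket_Lb_Lb k l : bracket (Lb k) (Lb l) = vscale (k - l)%:~R (Lb (k + l)).
Proof.
rewrite bracket_Lb_r; apply: V_ext => j /=; rewrite /Lact /= ?mulr0 //.
have [->|jkl] := eqVneq j (k + l); first by rewrite addrK !eqxx mulr1; ring.
by rewrite ifF ?mulr0 //; apply: contraNF jkl => /eqP <-; rewrite subrK.
Qed.

Lemma linear_on_S_comb F a c x y z : linear_on_S F -> inS x -> inS y -> inS z ->
  F (vadd (vscale a x) (vadd (vscale c y) z)) =
  vadd (vscale a (F x)) (vadd (vscale c (F y)) (F z)).
Proof.
move=> [_ FD FZ] xS yS zS; have cyS := inS_vscale c yS.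
by rewrite FD ?FD ?FZ //; [exact: inS_vscale | exact: inS_vadd].
Qed.

Lemma derivation_linear D : derivation D -> linear_on_S D.
Proof.
case=> D0 [D1 [[[S0 A0 Z0] _ _] [[S1 A1 Z1] _ _] DE]]; split.
- by move=> x xS; rewrite DE //; apply: inS_vadd; [exact: S0 | exact: S1].
- move=> x y xS yS; have xyS := inS_vadd xS yS.
  by rewrite !DE // A0 // A1 //; apply: V_ext => j /=; ring.
- move=> c x xS; have cxS := inS_vscale c xS.
  by rewrite !DE // Z0 // Z1 //; apply: V_ext => j /=; ring.
Qed.

Lemma derivation_Lb D k l : derivation D ->
  D (bracket (Lb k) (Lb l)) =
  vadd (bracket (D (Lb k)) (Lb l)) (bracket (Lb k) (D (Lb l))).
Proof.
case=> D0 [D1 [[[S0 _ _] _ L0] [[S1 _ _] _ L1] DE]].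
have Lb_even n : homog false (Lb n) by [].
have LbS := inS_Lb.
have klS : inS (bracket (Lb k) (Lb l)) by rewrite bracket_Lb_Lb; exact: inS_vscale.
rewrite DE // (L0 false false) ?(L1 false false) // !DE //.
rewrite !bracket_Lb_r !bracket_Lb_l.
by apply: V_ext => j; rewrite /= /sgn /Lact /=; ring.
Qed.

Lemma derivation_Lb_inner D : derivation D ->
  exists2 b, inS b & forall n, D (Lb n) = bracket b (Lb n).
Proof.
move=> derD; have [DS _ DZ] := derivation_linear derD.
have cocycle k l j :
    (k - l)%:~R * (D (Lb (k + l))).1 j =
      Lact 1 (D (Lb k)).1 l j - Lact 1 (D (Lb l)).1 k j /\
    (k - l)%:~R * (D (Lb (k + l))).2 j =
      Lact 2^-1 (D (Lb k)).2 l j - Lact 2^-1 (D (Lb l)).2 k j.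
  have := derivation_Lb k l derD.
  rewrite bracket_Lb_Lb DZ; last exact: inS_Lb.
  rewrite bracket_Lb_r bracket_Lb_l => E.
  by split; [have := congr1 (fun z => z.1 j) E | have := congr1 (fun z => z.2 j) E].
have [t1 t11 t12] := nonexceptional_weight_gt0 (@ltr01 C).
have half_gt0 : 0 < 2^-1 :> C by rewrite invr_gt0 ltr0n.
have [t2 t21 t22] := nonexceptional_weight_gt0 half_gt0.
pose b : V := (coboundary_coef 1 (fun n => (D (Lb n)).1),
               coboundary_coef 2^-1 (fun n => (D (Lb n)).2)).
exists b.
  have /inS_fsupp[f1 f2] := DS _ (inS_Lb 0).
  by apply/inS_fsupp; split; exact: fsupp_coboundary_coef.
move=> n; rewrite bracket_Lb_r; apply: V_ext => j /=.
  by apply: cocycle_coboundary => // k l j'; case: (cocycle k l j').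
by apply: cocycle_coboundary => // k l j'; case: (cocycle k l j').
Qed.

Lemma local_derivation_Lb_comb Delta m a c : local_derivation Delta ->
  Delta (Lb 0) = vzero -> Delta (Lb 1) = vzero ->
  exists2 b, inS b & Delta (Lb m) =
    vadd (vscale a (bracket b (Lb 0)))
         (vadd (vscale c (bracket b (Lb 1))) (bracket b (Lb m))).
Proof.
move=> [linDelta locDelta] Delta0 Delta1; have LbS := inS_Lb.
set x := vadd (vscale a (Lb 0)) (vadd (vscale c (Lb 1)) (Lb m)).
have xS : inS x.
  by apply: inS_vadd; [exact: inS_vscale | apply: inS_vadd; first exact: inS_vscale].
have [D [derD Dx]] := locDelta x xS.
have [b bS Db] := derivation_Lb_inner derD.
have Dcomb := linear_on_S_comb a c (derivation_linear derD) (LbS 0) (LbS 1) (LbS m).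
have Deltacomb := linear_on_S_comb a c linDelta (LbS 0) (LbS 1) (LbS m).
exists b => //; rewrite -!Db -Dcomb -/x -Dx Deltacomb Delta0 Delta1.
by apply: V_ext => j /=; rewrite !mulr0 !add0r.
Qed.

Theorem lemma3p3 (Delta : V -> V) :
  local_derivation Delta ->
  Delta (Lb 0) = vzero -> Delta (Lb 1) = vzero ->
  forall m : int, Delta (Lb m) = vzero.
Proof.
move=> locDelta Delta0 Delta1 m.
have [[DeltaS _ _] _] := locDelta.
have /inS_fsupp[f1 f2] := DeltaS _ (inS_Lb m).
suff vanish r : r != 0 ->
    laurent (Delta (Lb m)).1 r = 0 /\ laurent (Delta (Lb m)).2 r = 0.
  by apply: V_ext => j; apply: laurent_eq0 => // r /vanish[].
move=> r0.
have [b /inS_fsupp[b1 b2] ->] := local_derivation_Lb_comb m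
  ((m - 1)%:~R * r ^ m) (- (m%:~R * r ^ (m - 1))) locDelta Delta0 Delta1.
by rewrite !bracket_Lb_r; split; apply: laurent_Lact_cancel.
Qed.
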